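(* Let $G$ be a $\tau$-regular graph with node set $V=S\cup T$ ($S,T$ nonempty, disjoint) and node features $X\in\mathbb{R}^{|V|\times d}$ with nonnegative entries. Consider the two-patch PatchGT computation: a node-level GNN $f^{\mathrm{GNN}}$ of $L$ layers $H_{l+1}=\sigma(H_lW_{1l}^\top+AH_lW_{2l}^\top)$ ($\sigma$ = ReLU, $\|W_{1l}\|_{1\to1},\|W_{2l}\|_{1\to1}\le1$), patch representations $z_S=\frac{1}{|V|}\sum_{i\in S}f_i^{\mathrm{GNN}}(X)$, $z_T=\frac{1}{|V|}\sum_{i\in T}f_i^{\mathrm{GNN}}(X)$, and a patch-level layer $g_T^{\mathrm{GNN}}(X)=\sigma(z_TW_1^\top+z_SW_2^\top)$ with $W_1,W_2\in\mathbb{R}^{d\times d}$. Define $\eta_{S\to T}=\max_{\alpha}\|g_T^{\mathrm{GNN}}(X+\alpha)-g_T^{\mathrm{GNN}}(X)\|_1$ over all $\alpha$ with $|\alpha_{ij}|\le\epsilon$ for $i\in S$ and $\alpha_{ij}=0$ for $i\in T$, and $\eta_{T\to T}=\max_{\beta}\|g_T^{\mathrm{GNN}}(X+\beta)-g_T^{\mathrm{GNN}}(X)\|_1$ over all $\beta$ with $|\beta_{ij}|\le\epsilon$ for $i\in T$ and $\beta_{ij}=0$ for $i\in S$ (with $\epsilon>0$). Then for every $\delta>0$ there exist parameters $(W_{1l},W_{2l})_l$, $W_1$, $W_2$ such that $\big|\eta_{S\to T}/\eta_{T\to T}-1\big|<\delta$; i.e. the ratio $\eta_{S\to T}/\eta_{T\to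 T}$ can be made arbitrarily close to $1$.
   Context: $f_i^{\mathrm{GNN}}(X)\in\mathbb{R}^{1\times d}$ denotes the row of the final layer output $H_L$ at node $i$, computed from input features $X$. For $W\in\mathbb{R}^{d\times d}$, $\|W\|_{1\to1}=\max_k\sum_j|W_{jk}|$. For a row vector $y$, $\|y\|_1=\sum_j|y_j|$. *)

From HB Require Import structures.
From mathcomp Require Import all_boot all_order all_algebra.
From mathcomp Require Import boolp classical_sets reals.
Set Implicit Arguments. Unset Strict Implicit. Unset Printing Implicit Defensive.
Import Order.TTheory GRing.Theory Num.Theory.
Local Open Scope ring_scope.

Section PatchGT.
Variable R : realType.

Definition simple_graph n (e : rel 'I_n) : Prop :=
  symmetric e /\ irreflexive e.
Definition regular n (e : rel 'I_n) (tau : nat) : Prop :=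
  forall i : 'I_n, #|[set j | e i j]| = tau.

Definition adjacency n (e : rel 'I_n) : 'M[R]_n := \matrix_(i, j) (e i j)%:R.

Definition norm11 d (W : 'M[R]_d) : R :=
  \big[Num.max/0]_(k < d) \sum_(j < d) `|W j k|.

Definition norm1 d (y : 'rV[R]_d) : R := \sum_(j < d) `|y 0 j|.

Definition relu m p (M : 'M[R]_(m, p)) : 'M[R]_(m, p) := map_mx (fun x => Num.max x 0) M.

Fixpoint gnn n d (A : 'M[R]_n) (W1s W2s : nat -> 'M[R]_d) (l : nat)
    (X : 'M[R]_(n, d)) : 'M[R]_(n, d) :=
  match l with
  | 0 => X
  | l'.+1 => let H := gnn A W1s W2s l' X in
             relu (H *m (W1s l')^T + A *m H *m (W2s l')^T)
  end.

Definition patch_rep n d (H : 'M[R]_(n, d)) (P : {set 'I_n}) : 'rV[R]_d :=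
  (n%:R)^-1 *: \sum_(i in P) row i H.

Definition gT n d (A : 'M[R]_n) (W1s W2s : nat -> 'M[R]_d) (L : nat)
    (W1 W2 : 'M[R]_d) (S T : {set 'I_n}) (X : 'M[R]_(n, d)) : 'rV[R]_d :=
  let H := gnn A W1s W2s L X in
  relu (patch_rep H T *m W1^T + patch_rep H S *m W2^T).

Definition perturb_on n d (P : {set 'I_n}) (eps : R) (a : 'M[R]_(n, d)) : Prop :=
  forall i j, (i \in P -> `|a i j| <= eps) /\ (i \notin P -> a i j = 0).

Definition eta_to_T n d (A : 'M[R]_n) (W1s W2s : nat -> 'M[R]_d) (L : nat)
    (W1 W2 : 'M[R]_d) (S T P : {set 'I_n}) (eps : R) (X : 'M[R]_(n, d)) : R :=
  sup [set norm1 (gT A W1s W2s L W1 W2 S T (X + a) - gT A W1s W2s L W1 W2 S T X)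
       | a in perturb_on P eps].

End PatchGT.

From HB Require Import structures.
From mathcomp Require Import all_boot all_order all_algebra.
From mathcomp Require Import boolp classical_sets reals ring.
Import Order.TTheory GRing.Theory Num.Theory.
Local Open Scope ring_scope.

(* Take [W1l = 1] and [W2l = 0] in every GNN layer: a perturbation then only
   passes through ReLUs, which are 1-Lipschitz and fix the nonnegative
   features.  With scalar patch weights [W1 = a], [W2 = b] each output
   coordinate of [g_T] is [relu (a z_T + b z_S)], so a perturbation of size
   [eps] on a patch [P] moves it by at most (and, for the constant perturbation
   [eps] on [P], by exactly) the weight of [P] times [|P| eps / |V|].  Choosing
   [a = |S|] and [b = |T|] makes both sensitivities equal to
   [d |S| |T| eps / |V|], so the ratio is exactly 1. *)

Section IteratedReLU.
Context {R : realDomainType}.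
Implicit Types x z : R.

Lemma relu_id x : 0 <= x -> Num.max x 0 = x.
Proof. by move=> x_ge0; case: (ger0P x) => // x_lt0; move: x_ge0; rewrite leNgt x_lt0. Qed.

Definition relu_iter (L : nat) x : R := iter L (fun y => Num.max y 0) x.

Lemma relu_iter_id L x : 0 <= x -> relu_iter L x = x.
Proof. by move=> x_ge0; rewrite /relu_iter; elim: L => //= L ->; rewrite relu_id. Qed.

Lemma relu_dist_le x z : 0 <= x -> `|Num.max z 0 - x| <= `|z - x|.
Proof.
move=> x_ge0; case: (ger0P z) => [//|z_lt0].
rewrite sub0r normrN ger0_norm // ler0_norm; last first.
  by rewrite subr_le0 (le_trans (ltW z_lt0)).
by rewrite opprB lerDl oppr_ge0 ltW.
Qed.

Lemma relu_iter_dist_le L x z : 0 <= x -> `|relu_iter L z - x| <= `|z - x|.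
Proof.
move=> x_ge0; rewrite /relu_iter; elim: L => //= L IH.
exact: le_trans (relu_dist_le _ _ x_ge0) IH.
Qed.

End IteratedReLU.

Lemma sup_eq_mem_ubound (R : realType) (E : set R) x :
  E x -> ubound E x -> sup E = x.
Proof.
move=> Ex ubEx; apply/le_anti/andP; split; first by apply: ge_sup => //; exists x.
by apply: sup_upper_bound => //; split; exists x.
Qed.

Lemma norm11_scalar_le1 (R : realType) d (a : R) :
  `|a| <= 1 -> norm11 (a%:M : 'M[R]_d) <= 1.
Proof.
move=> a_le1; apply: bigmax_le => // k _.
rewrite (bigD1 k) //= mxE eqxx mulr1n big1 ?addr0 // => j /negbTE jk.
by rewrite mxE jk mulr0n normr0.
Qed.

Section IdentityGNN.
Variables (R : realType) (n d : nat) (A : 'M[R]_n).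

Lemma gnn_identity_entry L (M : 'M[R]_(n, d)) i j :
  gnn A (fun _ => 1%:M) (fun _ => 0) L M i j = relu_iter L (M i j).
Proof.
elim: L i j => //= L IH i j.
by rewrite /relu mxE trmx0 mulmx0 addr0 trmx1 mulmx1 IH.
Qed.

Lemma gT_identity_scalar_entry L (a b : R) (S T : {set 'I_n}) (M : 'M[R]_(n, d)) j :
  gT A (fun _ => 1%:M) (fun _ => 0) L a%:M b%:M S T M 0 j =
  Num.max (n%:R^-1 * (a * \sum_(i in T) relu_iter L (M i j)
                      + b * \sum_(i in S) relu_iter L (M i j))) 0.
Proof.
rewrite /gT /relu mxE !tr_scalar_mx !mul_mx_scalar /patch_rep !mxE !summxE.
rewrite mulrDr !(mulrCA n%:R^-1).
by congr (Num.max (_ * (_ * _) + _ * (_ * _)) 0); apply: eq_bigr => i _;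
  rewrite !mxE gnn_identity_entry.
Qed.

End IdentityGNN.

(* [g] abstracts [g_T] with identity GNN weights; the roles of [P] and [Q] let
   one argument cover perturbations of [S] and of [T]. *)
Section PatchSensitivity.
Variables (R : realType) (n d L : nat) (P Q : {set 'I_n}) (wP wQ eps : R).
Variables (X : 'M[R]_(n, d)) (g : 'M[R]_(n, d) -> 'rV[R]_d).

Hypothesis PQ_disjoint : [disjoint P & Q].
Hypothesis wP_ge0 : 0 <= wP.
Hypothesis wQ_ge0 : 0 <= wQ.
Hypothesis eps_gt0 : 0 < eps.
Hypothesis X_ge0 : forall i j, 0 <= X i j.

Let patch_comb (M : 'M[R]_(n, d)) j :=
  n%:R^-1 * (wP * \sum_(i in P) relu_iter L (M i j)
             + wQ * \sum_(i in Q) relu_iter L (M i j)).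

Hypothesis g_entry : forall M j, g M 0 j = Num.max (patch_comb M j) 0.

Let gain := n%:R^-1 * wP * (#|P|%:R * eps).

Let scale_ge0 : 0 <= n%:R^-1 * wP.
Proof. by rewrite mulr_ge0 ?invr_ge0 ?ler0n. Qed.

Let gain_ge0 : 0 <= gain.
Proof. by rewrite /gain mulr_ge0 // mulr_ge0 // ltW. Qed.

Let patch_comb_X_ge0 j : 0 <= patch_comb X j.
Proof.
rewrite mulr_ge0 ?invr_ge0 ?ler0n // addr_ge0 // mulr_ge0 // sumr_ge0 // => i _;
  by rewrite (relu_iter_id L _ (X_ge0 i j)).
Qed.

Let g_at_X j : g X 0 j = patch_comb X j.
Proof. by rewrite g_entry relu_id. Qed.

Let patch_comb_shift (a : 'M[R]_(n, d)) j : (forall i, i \notin P -> a i j = 0) ->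
  patch_comb (X + a) j - patch_comb X j =
  n%:R^-1 * wP * \sum_(i in P) (relu_iter L ((X + a) i j) - X i j).
Proof.
move=> a_off_P; rewrite /patch_comb.
have -> : \sum_(i in Q) relu_iter L ((X + a) i j) = \sum_(i in Q) X i j.
  apply: eq_bigr => i iQ.
  by rewrite mxE a_off_P ?(disjointFl PQ_disjoint iQ) // addr0 relu_iter_id.
have -> : \sum_(i in Q) relu_iter L (X i j) = \sum_(i in Q) X i j.
  by apply: eq_bigr => i _; rewrite relu_iter_id.
under [in RHS]eq_bigr => i _ do rewrite -[X i j](relu_iter_id L _ (X_ge0 i j)).
rewrite sumrB; ring.
Qed.

Lemma patch_perturb_le (a : 'M[R]_(n, d)) j :
  perturb_on P eps a -> `|g (X + a) 0 j - g X 0 j| <= gain.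
Proof.
move=> a_adm; rewrite g_entry g_at_X.
apply: le_trans (relu_dist_le _ _ (patch_comb_X_ge0 j)) _.
rewrite patch_comb_shift => [|i iNP]; last exact: (a_adm i j).2.
rewrite normrM ger0_norm //; apply: ler_wpM2l => //.
apply: le_trans (ler_norm_sum _ _ _) _.
rewrite mulr_natl -sumr_const; apply: ler_sum => i iP.
apply: le_trans (relu_iter_dist_le _ _ _ (X_ge0 i j)) _.
by rewrite mxE addrAC subrr add0r; exact: (a_adm i j).1.
Qed.

Let bump : 'M[R]_(n, d) := \matrix_(i, j) if i \in P then eps else 0.

Let bump_adm : perturb_on P eps bump.
Proof.
move=> i j; rewrite mxE; split => [iP | /negbTE ->//].
by rewrite iP ger0_norm // ltW.
Qed.

Let patch_perturb_bump j : g (X + bump) 0 j - g X 0 j = gain.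
Proof.
have shift : patch_comb (X + bump) j - patch_comb X j = gain.
  rewrite patch_comb_shift => [|i /negbTE iNP]; last by rewrite mxE iNP.
  rewrite /gain mulr_natl -sumr_const; congr (_ * _); apply: eq_bigr => i iP.
  have Xeps_ge0 : 0 <= X i j + eps by rewrite addr_ge0 // ltW.
  by rewrite !mxE iP relu_iter_id // addrAC subrr add0r.
rewrite g_entry g_at_X -(subrK (patch_comb X j) (patch_comb _ j)) shift.
by rewrite relu_id ?addrK // (addr_ge0 gain_ge0 (patch_comb_X_ge0 j)).
Qed.

Lemma patch_sensitivity :
  sup [set norm1 (g (X + a) - g X) | a in perturb_on P eps] = d%:R * gain.
Proof.
apply: sup_eq_mem_ubound.
  exists bump => //; rewrite /norm1 -[d in d%:R]card_ord mulr_natl -sumr_const.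
  by apply: eq_bigr => j _; rewrite !mxE patch_perturb_bump ger0_norm.
move=> _ [a a_adm <-]; rewrite /norm1 -[d in d%:R]card_ord mulr_natl -sumr_const.
by apply: ler_sum => j _; rewrite !mxE; exact: patch_perturb_le.
Qed.

End PatchSensitivity.

Theorem theorem5 (R : realType) (n d L tau : nat) (e : rel 'I_n)
    (S T : {set 'I_n}) (X : 'M[R]_(n, d)) (eps delta : R) :
  (0 < d)%N ->
  simple_graph e -> regular e tau ->
  S != finset.set0 -> T != finset.set0 -> S :&: T = finset.set0 -> S :|: T = [set: 'I_n] ->
  (forall i j, 0 <= X i j) ->
  0 < eps -> 0 < delta ->
  exists (W1s W2s : nat -> 'M[R]_d) (W1 W2 : 'M[R]_d),
    (forall l, (l < L)%N -> norm11 (W1s l) <= 1 /\ norm11 (W2s l) <= 1) /\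
    let etaST := eta_to_T (adjacency R e) W1s W2s L W1 W2 S T S eps X in
    let etaTT := eta_to_T (adjacency R e) W1s W2s L W1 W2 S T T eps X in
    0 < etaTT /\ `|etaST / etaTT - 1| < delta.
Proof.
move=> d_gt0 _ _ S_neq0 T_neq0 ST_disj _ X_ge0 eps_gt0 delta_gt0.
exists (fun _ => 1%:M), (fun _ => 0), #|S|%:R%:M, #|T|%:R%:M; split.
  move=> l _; rewrite -(raddf0 (@scalar_mx R d)).
  by rewrite !norm11_scalar_le1 ?normr1 ?normr0 ?ler01.
have ST_disjoint : [disjoint S & T] by rewrite -setI_eq0 ST_disj.
pose g := @gT R n d (adjacency R e) (fun _ => 1%:M) (fun _ => 0) L #|S|%:R%:M #|T|%:R%:M S T.
pose sens := d%:R * (n%:R^-1 * (#|S|%:R * #|T|%:R * eps)).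
have etaST : sup [set norm1 (g (X + a) - g X) | a in perturb_on S eps] = sens.
  rewrite (@patch_sensitivity _ _ _ L S T #|T|%:R #|S|%:R _ X g) ?ler0n //.
  - by rewrite /sens; ring.
  - by move=> M j; rewrite gT_identity_scalar_entry addrC.
have etaTT : sup [set norm1 (g (X + a) - g X) | a in perturb_on T eps] = sens.
  rewrite (@patch_sensitivity _ _ _ L T S #|S|%:R #|T|%:R _ X g) ?ler0n //.
  - by rewrite /sens; ring.
  - by rewrite disjoint_sym.
  - by move=> M j; rewrite gT_identity_scalar_entry.
rewrite /eta_to_T -/g etaST etaTT.
have n_gt0 : (0 < n)%N.
  by rewrite -[n]card_ord (leq_trans _ (max_card S)) // card_gt0.
have sens_gt0 : 0 < sens by rewrite /sens !mulr_gt0 ?invr_gt0 ?ltr0n ?card_gt0.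
by split; rewrite // divff ?gt_eqF // subrr normr0.
Qed.
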